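(* Let $V$ be a vertex operator superalgebra, $g$ an automorphism of $V$ of finite order, $T'$ the order of $\sigma g$, and let $n\in\frac{1}{T'}\mathbb{Z}_{\ge 0}$ with $\ell=\lfloor n\rfloor$. Then $A_{g,n}(V)$ is a quotient algebra of $A_{\sigma,\ell}(V^{\langle\sigma g\rangle})$, where $\langle\sigma g\rangle$ is the cyclic group generated by $\sigma g$, $V^{\langle\sigma g\rangle}$ is the fixed-point vertex operator subsuperalgebra, and $\sigma$ is regarded as an automorphism of $V^{\langle\sigma g\rangle}$. More precisely, $V^{\langle\sigma g\rangle}=V^{0*}$, the identity map of $V^{0*}$ sends $O_{\sigma,\ell}(V^{\langle\sigma g\rangle})$ into $O_{g,n}(V)$, the products $*_{\sigma,\ell}$ and $*_{g,n}$ coincide on $V^{0*}$, and the induced map $A_{\sigma,\ell}(V^{\langle\sigma g\rangle})\to A_{g,n}(V)$ is a surjective algebra homomorphism.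
   Context: A vertex operator superalgebra $V=\bigoplus_{n\in\frac12\mathbb Z}V_n=V_{\bar0}\oplus V_{\bar1}$ has $V_{\bar0}=\bigoplus_{n\in\mathbb Z}V_n$, $V_{\bar1}=\bigoplus_{n\in\frac12+\mathbb Z}V_n$; its canonical automorphism $\sigma$ acts as $(-1)^i$ on $V_{\bar i}$. Write $Y(v,z)=\sum v_nz^{-n-1}$, $Y(\omega,z)=\sum L(n)z^{-n-2}$. For $g$ of finite order with $T'=o(\sigma g)$, let $V^{r*}=\{v\in V:\sigma g v=e^{-2\pi i r/T'}v\}$ for $0\le r\le T'-1$. Write $n=\ell+\frac{i}{T'}$ with $\ell,i\in\mathbb Z_{\ge0}$, $0\le i\le T'-1$; for $0\le r\le T'-1$ set $\delta_i(r)=1$ if $r\le i$, $\delta_i(r)=0$ if $i<r\le T'-1$, and $\delta_i(T')=0$. For $v\in V$ and homogeneous $u\in V^{r*}$ define $u\circ_{g,n}v=\mathrm{Res}_z Y(u,z)v\,\frac{(1+z)^{\mathrm{wt}\,u-1+\delta_i(r)+\ell+r/T'}}{z^{2\ell+\delta_i(r)+\delta_i(T'-r)+1}}$, and $u*_{g,n}v=\sum_{m=0}^{\ell}(-1)^m\binom{m+\ell}{\ell}\mathrm{Res}_zY(u,z)v\frac{(1+z)^{\mathrm{wt}\,u+\ell}}{z^{\ell+m+1}}$ if $r=0$, and $u*_{g,n}v=0$ if $r>0$; extend bilinearly. $O_{g,n}(V)$ is the span of all $u\circ_{g,n}v$ and $L(-1)u+L(0)u$ ($u,v\in V$), and $A_{g,n}(V)=V/O_{g,n}(V)$,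 which is known to be an associative algebra under the product induced by $*_{g,n}$. For a vertex operator superalgebra $U$ with automorphism $\sigma$ (so $\sigma\cdot\sigma=1$, $T'=1$), $A_{\sigma,\ell}(U)$ is defined by the same recipe; in particular $O_{\sigma,\ell}(U)$ is spanned by $\mathrm{Res}_zY(u,z)v\frac{(1+z)^{\mathrm{wt}\,u+\ell}}{z^{2\ell+2}}$ and $(L(-1)+L(0))u$. *)

From HB Require Import structures.
From mathcomp Require Import all_boot all_order all_algebra.
From mathcomp Require Import all_classical all_reals all_analysis.
From mathcomp Require Import complex.
From Stdlib Require Import ClassicalEpsilon.

Set Implicit Arguments.
Unset Strict Implicit.
Unset Printing Implicit Defensive.

Import Order.TTheory GRing.Theory Num.Theory.
Local Open Scope ring_scope.

Section VOSA.
Variable R : realType.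
Local Notation C := R[i].

(*   wtp k   : projection of V = (+)_{n in 1/2 Z} V_n onto V_{k/2}       *)
(*   Yop u v m = u_m v   (Y(u,z) = sum_m u_m z^{-m-1})                  *)
Record vosa_data := VosaData {
  vcar :> lmodType C;
  wtp : int -> vcar -> vcar;
  Yop : vcar -> vcar -> int -> vcar;
  vac : vcar;
  omg : vcar;
  cc : C;
  sig : vcar -> vcar }.

Arguments wtp : clear implicits.
Arguments Yop : clear implicits.
Arguments vac : clear implicits.
Arguments omg : clear implicits.
Arguments cc : clear implicits.
Arguments sig : clear implicits.

Variable V : vosa_data.

Definition Homog (k : int) (v : V) : Prop := wtp V k v = v.

Definition Lop (m : int) (v : V) : V := Yop V (omg V) v (m + 1).

Definition half (k : int) : C := k%:~R / 2%:R.

Definition parity (k : int) : bool := odd `|k|%N.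

Definition gbinom (a : C) (j : nat) : C :=
  (\prod_(t < j) (a - t%:R)) / (j`!)%:R.

Definition in_span (P : V -> Prop) (x : V) : Prop :=
  exists (n : nat) (f : 'I_n -> V) (c : 'I_n -> C),
    (forall j, P (f j)) /\ x = \sum_(j < n) c j *: f j.

End VOSA.

Arguments wtp {R} v _ _.
Arguments Yop {R} v _ _ _.
Arguments vac {R} v.
Arguments omg {R} v.
Arguments cc {R} v.
Arguments sig {R} v _.
Arguments Homog {R V} k v.
Arguments Lop {R V} m v.
Arguments half {R} k.

Section Laws.
Variable R : realType.
Local Notation C := R[i].

Record is_vosa (V : vosa_data R) : Prop := {
  wtp_lin : forall k (a : C) (x y : V),
      wtp V k (a *: x + y) = a *: wtp V k x + wtp V k y;
  wtp_idem : forall k m (x : V),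
      wtp V k (wtp V m x) = if k == m then wtp V m x else 0;
  wtp_decomp : forall x : V, exists N : nat,
      (forall k : int, (N%:Z < `|k|)%R -> wtp V k x = 0) /\
      x = \sum_(j < N.*2.+1) wtp V (j%:Z - N%:Z) x;
  wtp_fd : forall k, exists (n : nat) (f : 'I_n -> V), forall x, Homog k x ->
      exists c : 'I_n -> C, x = \sum_(j < n) c j *: f j;
  wtp_low : exists N : int, forall k, (k < N)%R -> forall x : V, wtp V k x = 0;
  Y_linl : forall (a : C) (u u' v : V) m,
      Yop V (a *: u + u') v m = a *: Yop V u v m + Yop V u' v m;
  Y_linr : forall (a : C) (u v v' : V) m,
      Yop V u (a *: v + v') m = a *: Yop V u v m + Yop V u v' m;
  Y_trunc : forall u v : V, exists N : int, forall m, (N <= m)%R -> Yop V u v m = 0;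
  Y_vac : forall (v : V) m, Yop V (vac V) v m = if m == -1 then v else 0;
  Y_create : forall (u : V) m, (0 <= m)%R -> Yop V u (vac V) m = 0;
  Y_create1 : forall u : V, Yop V u (vac V) (-1) = u;
  (* Jacobi identity (Borcherds component form) for parity-homogeneous u, v *)
  Y_jacobi : forall k1 k2 (u v w : V) (p q r : int), Homog k1 u -> Homog k2 v ->
      exists N : nat, forall M : nat, (N <= M)%N ->
        \sum_(j < M) gbinom p%:~R j *: Yop V (Yop V u v (r + j%:Z)) w (p + q - j%:Z)
        = \sum_(j < M) ((-1) ^+ j * gbinom r%:~R j) *:
            (Yop V u (Yop V v w (q + j%:Z)) (p + r - j%:Z)
             - ((-1) ^+ `|r|%N * (-1) ^+ (parity k1 && parity k2)) *:
                 Yop V v (Yop V u w (p + j%:Z)) (q + r - j%:Z));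
  omg_wt : Homog 4 (omg V);
  vir : forall (m n : int) (v : V),
      Lop m (Lop n v) - Lop n (Lop m v)
      = (m - n)%:~R *: Lop (m + n) v
        + (if m + n == 0 then (m ^+ 3 - m)%:~R / 12%:R * cc V else 0) *: v;
  L0_wt : forall k (v : V), Homog k v -> Lop 0 v = half k *: v;
  Lm1_der : forall (u v : V) (m : int),
      Yop V (Lop (-1) u) v m = - (m%:~R : C) *: Yop V u v (m - 1);
  sig_lin : forall (a : C) (x y : V), sig V (a *: x + y) = a *: sig V x + sig V y;
  sig_homog : forall k (v : V), Homog k v -> sig V v = (-1) ^+ parity k *: v }.

Definition is_aut (V : vosa_data R) (g : V -> V) : Prop :=
  [/\ forall (a : C) (x y : V), g (a *: x + y) = a *: g x + g y,
      bijective g,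
      forall (u v : V) m, g (Yop V u v m) = Yop V (g u) (g v) m,
      g (vac V) = vac V & g (omg V) = omg V].

Definition is_vosa_hom (U V : vosa_data R) (f : U -> V) : Prop :=
  [/\ forall (a : C) (x y : U), f (a *: x + y) = a *: f x + f y,
      forall (u v : U) m, f (Yop U u v m) = Yop V (f u) (f v) m,
      f (vac U) = vac V & f (omg U) = omg V].

Definition is_order (V : vosa_data R) (h : V -> V) (T : nat) : Prop :=
  [/\ (0 < T)%N, forall v, iter T h v = v &
      forall k, (0 < k < T)%N -> exists v, iter k h v <> v].

Variable V : vosa_data R.

Definition sigg (g : V -> V) (v : V) : V := sig V (g v).

Definition zeta (T r : nat) : C :=
  let th := (2%:R * pi * r%:R / T%:R : R) in Complex (cos th) (- sin th).

Definition vstar (g : V -> V) (T r : nat) (v : V) : Prop :=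
  sigg g v = zeta T r *: v.

Definition fixed_pt (g : V -> V) (v : V) : Prop :=
  forall k : nat, iter k (sigg g) v = v.

Definition deltai (i r : nat) : nat := (r <= i)%N.

Definition trunc_bd (u v : V) : nat :=
  epsilon (inhabits 0%N)
    (fun N : nat => forall m : int, (N%:Z <= m)%R -> Yop V u v m = 0).

(* Res_z Y(u,z)v (1+z)^a / z^b  =  sum_{j >= 0} binom(a,j) u_{j-b} v *)
Definition res (a : C) (b : nat) (u v : V) : V :=
  \sum_(j < trunc_bd u v + b) gbinom a j *: Yop V u v (j%:Z - b%:Z).

(* u o_{g,n} v for u in V^{r*} homogeneous of weight k/2, n = l + i/T *)
Definition circ (T l i : nat) (k : int) (r : nat) (u v : V) : V :=
  res (half k - 1 + (deltai i r)%:R + l%:R + r%:R / T%:R)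
      (2 * l + deltai i r + deltai i (T - r) + 1) u v.

Definition Ogen (g : V -> V) (T l i : nat) (x : V) : Prop :=
  (exists (r : nat) (k : int) (u v : V),
      [/\ (r < T)%N, Homog k u, vstar g T r u & x = circ T l i k r u v])
  \/ (exists u : V, x = Lop (-1) u + Lop 0 u).

Definition Ogn (g : V -> V) (T l i : nat) (x : V) : Prop :=
  in_span (Ogen g T l i) x.

Definition star_hom (l : nat) (k : int) (u v : V) : V :=
  \sum_(m < l.+1) ((-1) ^+ m * ('C(m + l, l))%:R) *: res (half k + l%:R) (l + m + 1) u v.

Definition pi0 (g : V -> V) (T : nat) (u : V) : V :=
  (T%:R)^-1 *: \sum_(j < T) iter j (sigg g) u.

Definition wbound (u : V) : nat :=
  epsilon (inhabits 0%N)
    (fun N : nat => forall k : int, (N%:Z < `|k|)%R -> wtp V k u = 0).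

(* bilinear extension of *_{g,n}: zero on V^{r*}, r > 0 *)
Definition star (g : V -> V) (T l : nat) (u v : V) : V :=
  \sum_(j < (wbound u).*2.+1)
     star_hom l (j%:Z - (wbound u)%:Z) (pi0 g T (wtp V (j%:Z - (wbound u)%:Z) u)) v.

End Laws.

Arguments is_aut {R} V g.
Arguments is_vosa_hom {R} U V f.
Arguments is_order {R} V h T.
Arguments sigg {R} V g v.
Arguments zeta {R} T r.
Arguments vstar {R} V g T r v.
Arguments fixed_pt {R} V g v.
Arguments circ {R} V T l i k r u v.
Arguments Ogen {R} V g T l i x.
Arguments Ogn {R} V g T l i x.
Arguments star_hom {R} V l k u v.
Arguments pi0 {R} V g T u.
Arguments star {R} V g T l u v.
Arguments res {R} V a b u v.

(* Write h = sigma g (of order T) and let iota : U -> V embed U = V^<h>.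
   V^<h> = V^{0*} since a vector fixed by h is fixed by all its powers.  On V^{0*}
   (r = 0, so delta_i(0) = 1 and delta_i(T) = 0) the generators of O_{sigma,l}(U)
   are literally generators of O_{g,n}(V), and *_{sigma,l}, *_{g,n} are built from
   the same residues, which iota preserves; so iota induces an algebra map.
   Surjectivity: for 0 < r < T every homogeneous u in V^{r*} lies in O_{g,n}(V).
   By the creation property u o_{g,n} 1 is a combination of the L(-1)^m u, each
   congruent to a multiple of u because (L(-1) + L(0)) u lies in O_{g,n}(V); the
   Chu-Vandermonde identity collapses the total coefficient to a binomial
   coefficient binom(r/T + integer, N) != 0.  Splitting v into its isotypic
   components for h then gives v = pi0 v modulo O_{g,n}(V). *)

From Pilot Require Import Defs.
From HB Require Import structures.
From mathcomp Require Import all_boot all_order all_algebra.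
From mathcomp Require Import all_classical all_reals all_analysis.
From mathcomp Require Import complex.
From mathcomp Require Import zify ring lra.
From Stdlib Require Import ClassicalEpsilon.
Import Order.TTheory GRing.Theory Num.Theory.
Local Open Scope ring_scope.
Set Implicit Arguments.
Unset Strict Implicit.
Unset Printing Implicit Defensive.

Section LinearMaps.
Variable R : realType.
Local Notation C := R[i].
Variables (U W : lmodType C) (f : U -> W).
Hypothesis f_lin : forall (a : C) x y, f (a *: x + y) = a *: f x + f y.

Lemma linf0 : f 0 = 0.
Proof.
have H := f_lin 1 0 0; rewrite addr0 !scale1r in H.
by apply: (addrI (f 0)); rewrite addr0 -H.
Qed.

Lemma linfD x y : f (x + y) = f x + f y.
Proof. by have := f_lin 1 x y; rewrite !scale1r. Qed.

Lemma linfZ a x : f (a *: x) = a *: f x.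
Proof. by have := f_lin a x 0; rewrite !addr0 linf0 addr0. Qed.

Lemma linfB x y : f (x - y) = f x - f y.
Proof. by rewrite linfD -scaleN1r linfZ scaleN1r. Qed.

Lemma linf_sum n (F : 'I_n -> U) : f (\sum_(j < n) F j) = \sum_(j < n) f (F j).
Proof.
elim: n F => [|n IH] F; first by rewrite !big_ord0 linf0.
by rewrite !big_ord_recr /= linfD IH.
Qed.

End LinearMaps.

Lemma sum_cut (M : nmodType) n m (G : nat -> M) :
  (forall j, (n <= j)%N -> G j = 0) -> (n <= m)%N ->
  \sum_(j < m) G j = \sum_(j < n) G j.
Proof.
move=> HG /subnK <-; elim: (m - n)%N => [//|d IH].
by rewrite addSn big_ord_recr /= IH HG ?addr0 // leq_addl.
Qed.

Lemma sum_shift (M : zmodType) n (F : nat -> M) :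
  F n = F 0%N -> \sum_(j < n) F j.+1 = \sum_(j < n) F j.
Proof.
move=> HF.
have recl : \sum_(j < n.+1) F j = F 0%N + \sum_(j < n) F j.+1 by rewrite big_ord_recl.
by move: recl; rewrite big_ord_recr /= HF addrC => /addrI.
Qed.

Lemma sum_window (M0 : nmodType) (G : int -> M0) (N M : nat) :
  (forall k : int, N%:Z < `|k| -> G k = 0) -> (N <= M)%N ->
  \sum_(j < M.*2.+1) G (j%:Z - M%:Z) = \sum_(j < N.*2.+1) G (j%:Z - N%:Z).
Proof.
move=> HG /subnK <-; elim: (M - N)%N => [//|d IH].
rewrite -IH addSn doubleS; set n := (d + N)%N.
rewrite big_ord_recl big_ord_recr /= !HG ?add0r ?addr0; first 1 last.
- by rewrite /bump leq0n add1n /n; lia.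
- by rewrite /n; lia.
by apply: eq_bigr => j _; congr G; rewrite /bump leq0n add1n; lia.
Qed.

Section Spans.
Variable R : realType.
Local Notation C := R[i].
Variables (V : vosa_data R) (P : V -> Prop).

Lemma span0 : in_span P 0.
Proof. exists 0%N, (fun _ => 0), (fun _ => 0); split; [by case | by rewrite big_ord0]. Qed.

Lemma span_gen x : P x -> in_span P x.
Proof.
move=> Px; exists 1%N, (fun _ => x), (fun _ => 1); split => //.
by rewrite big_ord1 scale1r.
Qed.

Lemma spanZ (a : C) x : in_span P x -> in_span P (a *: x).
Proof.
move=> [n [f [c [Hf ->]]]]; exists n, f, (fun j => a * c j); split => //.
by rewrite scaler_sumr; apply: eq_bigr => j _; rewrite scalerA.
Qed.

Lemma spanD x y : in_span P x -> in_span P y -> in_span P (x + y).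
Proof.
move=> [n1 [f1 [c1 [H1 ->]]]] [n2 [f2 [c2 [H2 ->]]]].
exists (n1 + n2)%N,
  (fun j => match fintype.split j with inl a => f1 a | inr b => f2 b end),
  (fun j => match fintype.split j with inl a => c1 a | inr b => c2 b end).
split; first by move=> j; case: (fintype.split j).
rewrite big_split_ord /=; congr (_ + _); apply: eq_bigr => j _.
  by rewrite (unsplitK (inl _ j)).
by rewrite (unsplitK (inr _ j)).
Qed.

Lemma spanB x y : in_span P x -> in_span P y -> in_span P (x - y).
Proof. by move=> Hx Hy; apply: spanD => //; rewrite -scaleN1r; apply: spanZ. Qed.

Lemma span_sum n (F : 'I_n -> V) :
  (forall j, in_span P (F j)) -> in_span P (\sum_(j < n) F j).
Proof.
elim: n F => [|n IH] F HF; first by rewrite big_ord0; apply: span0.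
by rewrite big_ord_recr /=; apply: spanD; [apply: IH => j|]; apply: HF.
Qed.

End Spans.

Section GenBinomial.
Variable R : realType.
Local Notation C := R[i].
Local Notation gbinom := (@gbinom R).

Lemma natS_neq0 n : (n.+1%:R : C) != 0.
Proof. by rewrite pnatr_eq0. Qed.

Lemma gbinom0 a : gbinom a 0 = 1.
Proof. by rewrite /gbinom big_ord0 fact0 divr1. Qed.

Lemma gbinomS a j : (j.+1)%:R * gbinom a j.+1 = a * gbinom (a - 1) j.
Proof.
rewrite /gbinom big_ord_recl /= subr0.
rewrite (eq_bigr (fun t : 'I_j => a - 1 - t%:R)); last first.
  by move=> t _; rewrite /bump /= add1n -addn1 natrD opprD addrA addrAC.
rewrite factS natrM invfM.
have h1 := natS_neq0 j.
have h2 : ((j`!)%:R : C) != 0 by rewrite pnatr_eq0 -lt0n fact_gt0.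
by field; apply/andP.
Qed.

(* Chu-Vandermonde identity for generalized binomial coefficients, by induction
   on n using the absorption identity on both factors. *)
Lemma vandermonde n : forall a c : C,
  \sum_(j < n.+1) gbinom a j * gbinom c (n - j) = gbinom (a + c) n.
Proof.
elim: n => [|n IH] a c; first by rewrite big_ord1 /= !gbinom0 mulr1.
apply: (mulfI (natS_neq0 n)); rewrite gbinomS.
have split_weight : forall j : 'I_n.+2,
    (n.+1)%:R * (gbinom a j * gbinom c (n.+1 - j))
  = j%:R * gbinom a j * gbinom c (n.+1 - j)
    + (n.+1 - j)%:R * gbinom a j * gbinom c (n.+1 - j).
  move=> j; rewrite -mulrA -mulrA -mulrDl -natrD subnKC //.
  by rewrite -ltnS ltn_ord.
rewrite mulr_sumr (eq_bigr _ (fun j _ => split_weight j)) big_split /=.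
have absorb_a : \sum_(j < n.+2) j%:R * gbinom a j * gbinom c (n.+1 - j)
    = a * gbinom (a - 1 + c) n.
  rewrite big_ord_recl /= !mul0r add0r -IH mulr_sumr.
  by apply: eq_bigr => j _; rewrite /bump /= add1n mulrA gbinomS subSS.
have absorb_c : \sum_(j < n.+2) (n.+1 - j)%:R * gbinom a j * gbinom c (n.+1 - j)
    = c * gbinom (a + (c - 1)) n.
  rewrite big_ord_recr /= subnn !mul0r addr0 -IH mulr_sumr.
  apply: eq_bigr => j _ /=; rewrite subSn; last by rewrite -ltnS ltn_ord.
  by rewrite mulrAC gbinomS -mulrA (mulrC (gbinom (c - 1) _)).
rewrite absorb_a absorb_c.
have -> : a - 1 + c = a + c - 1 by ring.
have -> : a + (c - 1) = a + c - 1 by ring.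
by rewrite mulrDl.
Qed.

End GenBinomial.

Section Grading.
Variable R : realType.
Local Notation C := R[i].
Local Notation half := (@Pilot.Defs.half R).
Local Notation gbinom := (@gbinom R).
Variable V : vosa_data R.
Hypothesis HV : is_vosa V.
Local Notation D := (@Lop R V (-1)).

Lemma Lop_lin m (a : C) (x y : V) : Lop m (a *: x + y) = a *: Lop m x + Lop m y.
Proof. by rewrite /Lop (Y_linr HV). Qed.

Lemma homog_wtp k (x : V) : Homog k (wtp V k x).
Proof. by rewrite /Homog (wtp_idem HV) eqxx. Qed.

Lemma homog0 k : Homog k (0 : V).
Proof. by rewrite /Homog (linf0 (wtp_lin HV k)). Qed.

Lemma homogL k (a : C) (x y : V) : Homog k x -> Homog k y -> Homog k (a *: x + y).
Proof. by rewrite /Homog (wtp_lin HV) => -> ->. Qed.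

Lemma homogZ k (a : C) (x : V) : Homog k x -> Homog k (a *: x).
Proof. by move=> Hx; rewrite -[_ *: _]addr0; apply: homogL => //; apply: homog0. Qed.

Lemma homog_sum k n (F : 'I_n -> V) :
  (forall j, Homog k (F j)) -> Homog k (\sum_(j < n) F j).
Proof.
elim: n F => [|n IH] F HF; first by rewrite big_ord0; apply: homog0.
rewrite big_ord_recr /= -[X in X + _]scale1r; apply: homogL; last exact: HF.
by apply: IH => j; apply: HF.
Qed.

Lemma wtp_L0 m (x : V) : wtp V m (Lop 0 x) = half m *: wtp V m x.
Proof.
have [N [_ Hx]] := wtp_decomp HV x.
rewrite [in LHS]Hx (linf_sum (Lop_lin 0)) (linf_sum (wtp_lin HV m)).
rewrite [in RHS]Hx (linf_sum (wtp_lin HV m)) scaler_sumr.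
apply: eq_bigr => j _.
rewrite (L0_wt HV (homog_wtp _ _)) (linfZ (wtp_lin HV m)) (wtp_idem HV).
by case: eqP => [->|_]; rewrite ?scaler0.
Qed.

Lemma half_inj : injective half.
Proof.
move=> k m /(congr1 ( *%R^~ 2%:R)); rewrite /half !divfK ?pnatr_eq0 //.
exact: intr_inj.
Qed.

Lemma eigen_homog k (x : V) : Lop 0 x = half k *: x -> Homog k x.
Proof.
move=> Hx.
have other_wt0 : forall m, m != k -> wtp V m x = 0.
  move=> m nmk; have := wtp_L0 m x; rewrite Hx (linfZ (wtp_lin HV m)) => /eqP.
  rewrite -subr_eq0 -scalerBl scaler_eq0 subr_eq0 => /orP [/eqP /half_inj Ek|/eqP //].
  by move: nmk; rewrite Ek eqxx.
have [N [_ Hd]] := wtp_decomp HV x.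
rewrite /Homog [in LHS]Hd (linf_sum (wtp_lin HV k)) [in RHS]Hd.
apply: eq_bigr => j _; rewrite (wtp_idem HV).
case: eqP => [//| ne]; rewrite other_wt0 //.
by apply/eqP => E; exact: ne (esym E).
Qed.

(* L(-1) raises the weight by 1, by the Virasoro relation [L(0), L(-1)] = L(-1). *)
Lemma homog_Lm1 k (y : V) : Homog k y -> Homog (k + 2) (D y).
Proof.
move=> Hy; apply: eigen_homog.
have := vir HV 0 (-1) y.
rewrite (L0_wt HV Hy) (linfZ (Lop_lin (-1))) /= scale0r addr0 sub0r opprK.
have -> : ((1 : int)%:~R : C) = 1 by [].
rewrite scale1r => /eqP; rewrite subr_eq => /eqP ->.
have -> : half (k + 2) = half k + 1 by rewrite /half intrD; field.
by rewrite scalerDl scale1r addrC.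
Qed.

Lemma homog_Lm1_iter k (x : V) m :
  Homog k x -> Homog (k + 2 * m%:Z) (iter m D x).
Proof.
move=> Hx; elim: m => [|m IH] /=; first by rewrite mulr0 addr0.
have -> : k + 2 * m.+1%:Z = (k + 2 * m%:Z) + 2 by lia.
exact: homog_Lm1.
Qed.

Lemma Y_vac_neg n (u : V) :
  Yop V u (vac V) (- n%:Z - 1) = (n`!%:R)^-1 *: iter n D u.
Proof.
elim: n u => [|n IH] u.
  by rewrite /= fact0 invr1 scale1r sub0r (Y_create1 HV).
have := Lm1_der HV u (vac V) (- n.+1%:Z).
have E1 : - (n.+1)%:Z = - n%:Z - 1 by lia.
rewrite E1 IH => H.
rewrite iterSr factS natrM invfM -scalerA H scalerA.
have -> : ((- n%:Z - 1)%:~R : C) = - (n.+1)%:R by rewrite -E1 intrN.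
by rewrite opprK mulVf ?scale1r // pnatr_eq0.
Qed.

Lemma res_vac a b (x : V) : res V a b x (vac V) =
  \sum_(j < b) (gbinom a j * ((b - 1 - j)`!)%:R^-1) *: iter (b - 1 - j) D x.
Proof.
rewrite /res (@sum_cut _ b _ (fun j : nat => gbinom a j *: Yop V x (vac V) (j%:Z - b%:Z)))
  ?leq_addl //; last by move=> j Hj; rewrite (Y_create HV) ?scaler0 //; lia.
apply: eq_bigr => j _.
have -> : j%:Z - b%:Z = - (b - 1 - j)%N%:Z - 1 by have := ltn_ord j; lia.
by rewrite Y_vac_neg scalerA.
Qed.

End Grading.

Section RootsOfUnity.
Variable R : realType.
Local Notation C := R[i].

Definition expi (th : R) : C := Complex (cos th) (- sin th).

Lemma zetaE T r : @zeta R T r = expi (2%:R * pi * r%:R / T%:R).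
Proof. by []. Qed.

Lemma expiD a b : expi a * expi b = expi (a + b).
Proof.
rewrite /expi cosD sinD.
transitivity (Complex (cos a * cos b - (- sin a) * (- sin b))
                      (cos a * (- sin b) + (- sin a) * cos b) : C); first by [].
by congr Complex; ring.
Qed.

Lemma zeta0 T : @zeta R T 0 = 1.
Proof. by rewrite zetaE mulr0 mul0r /expi cos0 sin0 oppr0. Qed.

Lemma zetaX T r : @zeta R T r = zeta T 1 ^+ r.
Proof.
elim: r => [|r IH]; first by rewrite zeta0 expr0.
by rewrite exprSr -IH !zetaE expiD -mulrDl -mulrDr -natrD addn1.
Qed.

Lemma zetaT T : (0 < T)%N -> @zeta R T T = 1.
Proof.
move=> T0; rewrite zetaE mulfK ?pnatr_eq0 -?lt0n // mulr_natl.
by rewrite /expi cos2pi sin2pi oppr0.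
Qed.

Lemma cos_lt1 (th : R) : 0 < th -> th < 2 * pi -> cos th < 1.
Proof.
move=> th0 th2; have pi0 := @pi_gt0 R; rewrite -(@cos0 R).
case: (lerP th pi) => hth.
  by rewrite ltr_cos ?in_itv /= ?lexx ?(ltW pi0) ?(ltW th0).
have -> : cos th = cos (pi *+ 2 - th) by rewrite cosB cos2pi sin2pi mul1r mul0r addr0.
have mem : 0 <= pi *+ 2 - th <= pi by rewrite -mulr_natl; apply/andP; split; lra.
by rewrite ltr_cos ?in_itv /= ?lexx ?(ltW pi0) ?mem // -mulr_natl; lra.
Qed.

Lemma zeta_neq1 T j : (0 < j < T)%N -> @zeta R T j != 1.
Proof.
move=> /andP [j0 jT]; rewrite zetaE /expi; apply/negP => /eqP [] Hc _.
have T0 : (0 < T%:R :> R) by rewrite ltr0n; lia.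
have t0 : 0 < j%:R / T%:R :> R by rewrite divr_gt0 // ltr0n.
have t1 : j%:R / T%:R < 1 :> R by rewrite ltr_pdivrMr // mul1r ltr_nat.
have pi0 := @pi_gt0 R.
have Eth : 2%:R * pi * j%:R / T%:R = 2 * pi * (j%:R / T%:R) :> R by rewrite mulrA.
move: Hc; rewrite Eth => /eqP; apply/negP; rewrite lt_eqF // cos_lt1 //; nra.
Qed.

Lemma sum_root_unity (F : fieldType) (x : F) n :
  x ^+ n = 1 -> x != 1 -> \sum_(r < n) x ^+ r = 0.
Proof.
move=> xn x1; have := subrX1 x n; rewrite xn subrr => /esym /eqP.
by rewrite mulf_eq0 subr_eq0 (negbTE x1) => /eqP.
Qed.

(* r/T is not an integer when 0 < r < T. *)
Lemma int_add_frac_neq0 (z : int) (r T : nat) :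
  (0 < r < T)%N -> (z%:~R + r%:R / T%:R : C) != 0.
Proof.
move=> /andP [r0 rT]; apply/negP => /eqP H.
have T0 : (T%:R : C) != 0 by rewrite pnatr_eq0; lia.
have : ((z * T%:Z + r%:Z)%:~R : C) == 0.
  have -> : ((z * T%:Z + r%:Z)%:~R : C) = (z%:~R + r%:R / T%:R) * T%:R.
    by rewrite intrD intrM mulrDl divfK.
  by rewrite H mul0r.
rewrite intr_eq0 => /eqP E; clear H T0.
have r0' : (0 < r%:Z) by [].
have rT' : (r%:Z < T%:Z) by [].
by case: (ltrP z 0) => hz; [have hz' : z <= -1 by lia|]; nra.
Qed.

End RootsOfUnity.

Section TwistedSectors.
Variable R : realType.
Local Notation C := R[i].
Local Notation half := (@Pilot.Defs.half R).
Local Notation gbinom := (@gbinom R).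
Variable V : vosa_data R.
Hypothesis HV : is_vosa V.
Local Notation D := (@Lop R V (-1)).
Variable g : V -> V.
Variables (T l i : nat).
Local Notation O := (Ogn V g T l i).

(* The scalar by which L(-1)^m acts on a vector of weight k/2 modulo O:
   prod_{t<m} (-(k/2 + t)). *)
Definition Lm1_coef (k : int) (m : nat) : C := \prod_(t < m) (- (half k + t%:R)).

(* Since (L(-1) + L(0)) y is in O, L(-1) y = -(wt y) y modulo O. *)
Lemma Lm1_iter_cong k x m : Homog k x -> O (iter m D x - Lm1_coef k m *: x).
Proof.
move=> Hx; elim: m => [|m IH].
  by rewrite /= /Lm1_coef big_ord0 scale1r subrr; apply: span0.
have Hy := homog_Lm1_iter HV m Hx.
set y := iter m D x in IH Hy *.
have gen : O (D y + Lop 0 y) by apply: span_gen; right; exists y.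
suff -> : iter m.+1 D x - Lm1_coef k m.+1 *: x =
    (D y + Lop 0 y) - (half k + m%:R) *: (y - Lm1_coef k m *: x).
  by apply: spanB => //; apply: spanZ.
rewrite iterS -/y (L0_wt HV Hy).
have -> : half (k + 2 * m%:Z) = half k + m%:R by rewrite /half intrD intrM; field.
rewrite /Lm1_coef big_ord_recr /= scalerBr scalerA mulrN scaleNr.
rewrite [_ * \prod_(_ < _) _]mulrC opprB -addrA; congr (_ + _).
by rewrite opprK addrCA subrr addr0.
Qed.

Lemma gbinom_neg_half k m : gbinom (- half k) m = (m`!%:R)^-1 * Lm1_coef k m.
Proof.
rewrite /gbinom /Lm1_coef mulrC; congr (_ * _); apply: eq_bigr => t _.
by rewrite opprD.
Qed.

(* The scalar by which u o_{g,n} 1 is a multiple of u modulo O: a generalized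
   binomial coefficient binom(r/T + integer, N), independent of wt u. *)
Definition circ_vac_coef (r : nat) : C :=
  gbinom ((deltai i r)%:R + l%:R - 1 + r%:R / T%:R)
         (2 * l + deltai i r + deltai i (T - r)).

(* Modulo O, u o_{g,n} 1 = circ_vac_coef r * u: by the creation property it is a
   combination of the L(-1)^m u, and Chu-Vandermonde sums up the coefficients. *)
Lemma circ_vac_cong k r x : Homog k x ->
  O (circ V T l i k r x (vac V) - circ_vac_coef r *: x).
Proof.
move=> Hx; rewrite /circ addn1 (res_vac HV).
set a := half k - 1 + (deltai i r)%:R + l%:R + r%:R / T%:R.
set N := (2 * l + deltai i r + deltai i (T - r))%N.
have -> : circ_vac_coef r = gbinom (a + - half k) N.
  by rewrite /circ_vac_coef /a /N; congr gbinom; ring.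
rewrite -(vandermonde N) scaler_suml -sumrB.
apply: span_sum => j; rewrite subn1 /= gbinom_neg_half mulrA.
rewrite -[(_ * Lm1_coef k _) *: x]scalerA -scalerBr.
by apply: spanZ; apply: Lm1_iter_cong.
Qed.

Lemma circ_vac_coef_neq0 r : (0 < r < T)%N -> circ_vac_coef r != 0.
Proof.
move=> rT; rewrite /circ_vac_coef /gbinom mulf_neq0 //.
apply/prodf_neq0 => t _.
have -> : (deltai i r)%:R + l%:R - 1 + r%:R / T%:R - t%:R
    = ((deltai i r + l)%:Z - 1 - t%:Z)%:~R + r%:R / T%:R :> C.
  by rewrite !intrB -[((deltai i r + l)%:Z)%:~R]/((deltai i r + l)%:R) natrD; ring.
exact: int_add_frac_neq0.
Qed.

Lemma twisted_in_O k r x : Homog k x -> vstar V g T r x -> (0 < r < T)%N -> O x.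
Proof.
move=> Hx Hr rT.
have gen : O (circ V T l i k r x (vac V)).
  apply: span_gen; left; exists r, k, x, (vac V); split => //.
  by case/andP: rT.
have cong := circ_vac_cong r Hx; have nz := circ_vac_coef_neq0 rT.
set c := circ_vac_coef r in cong nz.
have -> : x = c^-1 *: (circ V T l i k r x (vac V)
                        - (circ V T l i k r x (vac V) - c *: x)).
  by rewrite opprB addrC subrK scalerA mulVf ?scale1r.
by apply: spanZ; apply: spanB.
Qed.

End TwistedSectors.

Section Isotypic.
Variable R : realType.
Local Notation C := R[i].
Variable V : vosa_data R.
Hypothesis HV : is_vosa V.
Variable g : V -> V.
Hypothesis Hg : is_aut V g.
Variable T : nat.
Hypothesis HT : is_order V (sigg V g) T.
Local Notation h := (sigg V g).
Local Notation w := (@zeta R T 1).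

Lemma T_gt0 : (0 < T)%N.
Proof. by case: HT. Qed.

Lemma h_lin (a : C) x y : h (a *: x + y) = a *: h x + h y.
Proof. by case: Hg => Hl _ _ _ _; rewrite /sigg Hl (sig_lin HV). Qed.

Lemma iter_h_lin n (a : C) x y :
  iter n h (a *: x + y) = a *: iter n h x + iter n h y.
Proof. by elim: n => [//|n IH] /=; rewrite IH h_lin. Qed.

(* h preserves the grading, since g fixes omega and sigma acts by a scalar. *)
Lemma h_homog k x : Homog k x -> Homog k (h x).
Proof.
move=> Hx.
have Hgx : Homog k (g x).
  apply: (eigen_homog HV); case: Hg => Hl _ HY _ Homg.
  rewrite /Lop -Homg -HY -[Yop _ _ x _]/(Lop 0 x) (L0_wt HV Hx).
  by rewrite -[_ *: x]addr0 Hl (linf0 (fun a => Hl a)) addr0.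
by rewrite /sigg (sig_homog HV Hgx); apply: homogZ.
Qed.

Lemma wT : w ^+ T = 1.
Proof. by rewrite -zetaX zetaT // T_gt0. Qed.

Lemma w_neq0 : w != 0.
Proof.
apply/negP => /eqP w0; have := wT; rewrite w0 expr0n.
rewrite eqn0Ngt T_gt0 /= => /eqP.
by rewrite eq_sym oner_eq0.
Qed.

Definition proj (r : nat) (v : V) : V :=
  (T%:R)^-1 *: \sum_(j < T) (w ^+ (r * j))^-1 *: iter j h v.

Lemma proj_lin r (a : C) x y : proj r (a *: x + y) = a *: proj r x + proj r y.
Proof.
rewrite /proj scalerA mulrC -scalerA -scalerDr; congr (_ *: _).
rewrite scaler_sumr -big_split /=; apply: eq_bigr => j _.
by rewrite iter_h_lin scalerDr !scalerA mulrC.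
Qed.

Lemma proj_homog k r v : Homog k v -> Homog k (proj r v).
Proof.
move=> Hv; apply: (homogZ HV); apply: (homog_sum HV) => j; apply: (homogZ HV).
by elim: (nat_of_ord j) => [//|n IH] /=; apply: h_homog.
Qed.

Lemma proj_vstar r v : vstar V g T r (proj r v).
Proof.
rewrite /vstar zetaX /proj (linfZ h_lin) scalerA mulrC -scalerA; congr (_ *: _).
rewrite (linf_sum h_lin).
pose F := fun j : nat => (w ^+ (r * j))^-1 *: iter j h v.
have shiftF : forall j : 'I_T, h ((w ^+ (r * j))^-1 *: iter j h v) = w ^+ r *: F j.+1.
  move=> j; rewrite (linfZ h_lin) /F scalerA -iterS; congr (_ *: _).
  by rewrite mulnSr exprD invfM mulrCA mulfV ?mulr1 // expf_neq0 // w_neq0.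
rewrite (eq_bigr _ (fun j _ => shiftF j)) -scaler_sumr (sum_shift (F := F)) //.
case: HT => _ hT _.
by rewrite /F hT muln0 mulnC exprM wT expr1n expr0 invr1.
Qed.

Lemma proj0 v : proj 0 v = pi0 V g T v.
Proof.
rewrite /proj /pi0; congr (_ *: _); apply: eq_bigr => j _.
by rewrite mul0n expr0 invr1 scale1r.
Qed.

(* The projections sum to the identity (orthogonality of characters). *)
Lemma proj_sum v : \sum_(r < T) proj r v = v.
Proof.
rewrite /proj -scaler_sumr exchange_big /=.
have regroup : forall j : 'I_T, \sum_(r < T) (w ^+ (r * j))^-1 *: iter j h v =
   (\sum_(r < T) ((w ^+ j)^-1) ^+ r) *: iter j h v.
  move=> j; rewrite scaler_suml; apply: eq_bigr => r _.
  by rewrite mulnC exprM exprVn.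
rewrite (eq_bigr _ (fun j _ => regroup j)) (bigD1 (Ordinal T_gt0)) //=.
rewrite [X in _ + X]big1 => [|j nj0].
  rewrite addr0 expr0 invr1 (eq_bigr (fun _ => 1)) => [|r _]; last by rewrite expr1n.
  by rewrite sumr_const card_ord scalerA mulVf ?scale1r // pnatr_eq0 -lt0n T_gt0.
have xT : ((w ^+ j)^-1) ^+ T = 1 by rewrite exprVn -exprM mulnC exprM wT expr1n invr1.
have x1 : (w ^+ j)^-1 != 1.
  rewrite invr_eq1 -zetaX; apply: zeta_neq1; rewrite ltn_ord andbT lt0n.
  by apply: contra nj0 => /eqP j0; apply/eqP/val_inj.
by rewrite sum_root_unity // scale0r.
Qed.

(* Consequently v is congruent to pi0 v modulo O_{g,n}(V): the other
   isotypic components are sums of homogeneous vectors of V^{r*}, r > 0. *)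
Lemma sub_pi0_in_O l i v : Ogn V g T l i (v - pi0 V g T v).
Proof.
rewrite -proj0.
have T0 := T_gt0.
have Hs := proj_sum v; rewrite -(prednK T0) big_ord_recl /= in Hs.
rewrite -{1}Hs addrAC subrr add0r.
apply: span_sum => r; rewrite /bump leq0n add1n.
have [N [_ Hd]] := wtp_decomp HV v.
rewrite Hd (linf_sum (proj_lin r.+1)); apply: span_sum => j.
apply: (twisted_in_O HV l i (r := r.+1) (proj_homog _ (homog_wtp HV _ _))).
  exact: proj_vstar.
by have := ltn_ord r; lia.
Qed.

End Isotypic.

Section Bounds.
Variable R : realType.
Local Notation gbinom := (@gbinom R).
Variable W : vosa_data R.
Hypothesis HW : is_vosa W.

Lemma trunc_spec (u v : W) :
  forall m, (trunc_bd u v)%:Z <= m -> Yop W u v m = 0.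
Proof.
apply: (epsilon_spec (inhabits 0%N)
  (fun N : nat => forall m : int, (N%:Z <= m)%R -> Yop W u v m = 0)).
have [N HN] := Y_trunc HW u v.
exists (absz N) => m Hm; apply: HN.
by apply: le_trans Hm; rewrite abszE; exact: ler_norm.
Qed.

Lemma wbound_spec (u : W) :
  forall k : int, ((wbound u)%:Z < `|k|)%R -> wtp W k u = 0.
Proof.
apply: (epsilon_spec (inhabits 0%N)
  (fun N : nat => forall k : int, (N%:Z < `|k|)%R -> wtp W k u = 0)).
by have [N [HN _]] := wtp_decomp HW u; exists N.
Qed.

Lemma resE a b (u v : W) N :
  (forall m, N%:Z <= m -> Yop W u v m = 0) ->
  res W a b u v = \sum_(j < N + b) gbinom a j *: Yop W u v (j%:Z - b%:Z).
Proof.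
move=> HN; rewrite /res.
set G := fun j : nat => gbinom a j *: Yop W u v (j%:Z - b%:Z).
rewrite -(@sum_cut _ (trunc_bd u v + b) (maxn (trunc_bd u v) N + b) G).
- rewrite -(@sum_cut _ (N + b) (maxn (trunc_bd u v) N + b) G) //.
  + by move=> j Hj; rewrite /G HN ?scaler0 //; lia.
  + by rewrite leq_add2r leq_maxr.
- by move=> j Hj; rewrite /G trunc_spec ?scaler0 //; lia.
- by rewrite leq_add2r leq_maxl.
Qed.

Lemma star_hom0 l k (v : W) : star_hom W l k 0 v = 0.
Proof.
rewrite /star_hom big1 // => m _; rewrite /res big1 ?scaler0 // => j _.
by rewrite (linf0 (fun a x y => Y_linl HW a x y v _)) scaler0.
Qed.

End Bounds.

Section Homomorphism.
Variable R : realType.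
Local Notation C := R[i].
Variables (V U : vosa_data R).
Hypotheses (HV : is_vosa V) (HU : is_vosa U).
Variable iota : U -> V.
Hypothesis Hiota : is_vosa_hom U V iota.

Lemma iota_lin (a : C) x y : iota (a *: x + y) = a *: iota x + iota y.
Proof. by case: Hiota => H _ _ _; apply: H. Qed.

Lemma iota_Y u v m : iota (Yop U u v m) = Yop V (iota u) (iota v) m.
Proof. by case: Hiota => _ H _ _; apply: H. Qed.

Lemma iota_L m x : iota (Lop m x) = Lop m (iota x).
Proof. by rewrite /Lop iota_Y; case: Hiota => _ _ _ ->. Qed.

Lemma iota_homog k x : Homog k x -> Homog k (iota x).
Proof.
move=> Hx; apply: (eigen_homog HV).
by rewrite -iota_L (L0_wt HU Hx) (linfZ iota_lin).
Qed.

Lemma iota_wtp k x : iota (wtp U k x) = wtp V k (iota x).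
Proof.
have [N [_ Hd]] := wtp_decomp HU x.
rewrite [in RHS]Hd (linf_sum iota_lin) (linf_sum (wtp_lin HV k)).
rewrite [in LHS]Hd (linf_sum (wtp_lin HU k)) (linf_sum iota_lin).
apply: eq_bigr => j _; rewrite (wtp_idem HU).
set y := wtp U (j%:Z - N%:Z) x.
have Hy : Homog (j%:Z - N%:Z) (iota y) by apply: iota_homog; apply: homog_wtp.
rewrite -Hy (wtp_idem HV); case: eqP => _ //.
exact: linf0 iota_lin.
Qed.

Lemma res_iota a b (u v : U) : iota (res U a b u v) = res V a b (iota u) (iota v).
Proof.
have trunc_V : forall m, (trunc_bd u v)%:Z <= m -> Yop V (iota u) (iota v) m = 0.
  by move=> m Hm; rewrite -iota_Y (trunc_spec HU) // (linf0 iota_lin).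
rewrite (resE HU a b (@trunc_spec _ U HU u v)) (resE HV a b trunc_V) (linf_sum iota_lin).
by apply: eq_bigr => j _; rewrite (linfZ iota_lin) iota_Y.
Qed.

Lemma star_hom_iota l k (y v : U) :
  iota (star_hom U l k y v) = star_hom V l k (iota y) (iota v).
Proof.
rewrite /star_hom (linf_sum iota_lin); apply: eq_bigr => m _.
by rewrite (linfZ iota_lin) res_iota.
Qed.

End Homomorphism.

Section FixedPointEmbedding.
Variable R : realType.
Variables (V U : vosa_data R).
Hypotheses (HV : is_vosa V) (HU : is_vosa U).
Variable g : V -> V.
Variable T : nat.
Hypothesis HT : is_order V (sigg V g) T.
Variable iota : U -> V.
Hypothesis Hiota : is_vosa_hom U V iota.
Hypothesis iota_fixed : forall y, fixed_pt V g (iota y).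

(* V^<h> = V^{0*}: being fixed by all powers of h means being fixed by h. *)
Lemma fixed_vstar0 v : fixed_pt V g v <-> vstar V g T 0 v.
Proof.
rewrite /vstar zeta0 scale1r; split; first by move/(_ 1%N).
by move=> hv k; elim: k => [//|k IH] /=; rewrite IH.
Qed.

(* Generators of O_{sigma,l}(U) map to generators of O_{g,n}(V): for r = 0,
   delta_i(0) = 1 and delta_i(T) = 0, so the two circle products coincide. *)
Lemma Ogn_iota l i x : (i < T)%N ->
  Ogn U (sig U) 1 l 0 x -> Ogn V g T l i (iota x).
Proof.
move=> Hi [n [f [c [Hf ->]]]].
rewrite (linf_sum (iota_lin Hiota)); apply: span_sum => j.
rewrite (linfZ (iota_lin Hiota)); apply: spanZ; apply: span_gen.
case: (Hf j) => [[r [k [u [v [r1 Hk _ ->]]]]] | [u ->]].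
  have -> : r = 0%N by lia.
  left; exists 0%N, k, (iota u), (iota v); split => //.
  - by case: HT.
  - exact: iota_homog Hk.
  - exact/fixed_vstar0.
  rewrite /circ /deltai leq0n !subn0 (leqNgt T i) Hi /= !mul0r.
  exact: res_iota.
by right; exists (iota u); rewrite (linfD (iota_lin Hiota)) !(iota_L Hiota).
Qed.

(* pi0 fixes the image of iota, hence iota intertwines *_{sigma,l} and *_{g,n}. *)
Lemma star_iota l u v : iota (star U (sig U) 1 l u v) = star V g T l (iota u) (iota v).
Proof.
have il := iota_lin Hiota.
have pi0_iota : forall y, pi0 V g T (iota y) = iota y.
  move=> y; rewrite /pi0 (eq_bigr (fun _ => iota y)) => [|j _]; last exact: iota_fixed.
  rewrite sumr_const card_ord -[iota y *+ T]scaler_nat scalerA mulVf ?scale1r //.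
  by rewrite pnatr_eq0 -lt0n; case: HT.
pose G := fun k : int => iota (star_hom U l k (wtp U k u) v).
have HGU : forall k : int, (wbound u)%:Z < `|k| -> G k = 0.
  by move=> k Hk; rewrite /G (wbound_spec HU) // star_hom0 // (linf0 il).
have HGV : forall k : int, (wbound (iota u))%:Z < `|k| -> G k = 0.
  move=> k Hk; rewrite /G (star_hom_iota HV HU Hiota) (iota_wtp HV HU Hiota).
  by rewrite (wbound_spec HV) // star_hom0.
rewrite /star (linf_sum il).
under eq_bigr => j _ do rewrite /pi0 big_ord1 /= invr1 scale1r -/(G _).
under [RHS]eq_bigr => j _ do
  rewrite -(iota_wtp HV HU Hiota) pi0_iota -(star_hom_iota HV HU Hiota) -/(G _).
rewrite -(sum_window HGU (leq_maxl (wbound u) (wbound (iota u)))).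
by rewrite -(sum_window HGV (leq_maxr (wbound u) (wbound (iota u)))).
Qed.

End FixedPointEmbedding.

Theorem lemma3p2 (R : realType)
  (V : vosa_data R) (HV : is_vosa V)
  (g : V -> V) (Hg : is_aut V g)
  (Hgfin : exists k : nat, (0 < k)%N /\ forall v, iter k g v = v)
  (T : nat) (HT : is_order V (sigg V g) T)
  (l i : nat) (Hi : (i < T)%N)
  (U : vosa_data R) (HU : is_vosa U)
  (iota : U -> V) (Hiota : is_vosa_hom U V iota) (Hinj : injective iota)
  (Himg : forall v : V, fixed_pt V g v <-> exists u : U, v = iota u) :
  (* V^{<sigma g>} = V^{0*} *)
  (forall v : V, fixed_pt V g v <-> vstar V g T 0 v) /\
  (* iota maps O_{sigma,l}(V^{<sigma g>}) into O_{g,n}(V), n = l + i/T *)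
  (forall x : U, Ogn U (sig U) 1 l 0 x -> Ogn V g T l i (iota x)) /\
  (* the products *_{sigma,l} and *_{g,n} coincide on V^{0*} *)
  (forall u v : U, iota (star U (sig U) 1 l u v) = star V g T l (iota u) (iota v)) /\
  (* the induced map A_{sigma,l}(V^{<sigma g>}) -> A_{g,n}(V) is a well-defined
     algebra homomorphism (linear, multiplicative, unital) ... *)
  (forall u u' : U, Ogn U (sig U) 1 l 0 (u - u') ->
      Ogn V g T l i (iota u - iota u')) /\
  (forall u v : U, Ogn V g T l i
      (iota (star U (sig U) 1 l u v) - star V g T l (iota u) (iota v))) /\
  (forall (a : R[i]) (u u' : U), iota (a *: u + u') = a *: iota u + iota u') /\
  iota (vac U) = vac V /\
  (* ... which is surjective *)
  (forall v : V, exists u : U, Ogn V g T l i (v - iota u)).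
Proof.
have iota_fixed : forall y, fixed_pt V g (iota y) by move=> y; apply/Himg; exists y.
have O_iota := Ogn_iota HV HU HT Hiota iota_fixed (l := l) Hi.
have star_compat := star_iota HV HU HT Hiota iota_fixed l.
split; first exact: fixed_vstar0.
split; first exact: O_iota.
split; first exact: star_compat.
split; first by move=> u u' H; rewrite -(linfB (iota_lin Hiota)); apply: O_iota.
split; first by move=> u v; rewrite star_compat subrr; apply: span0.
split; first exact: iota_lin.
split; first by case: Hiota.
move=> v; have /Himg [u pi0_v] : fixed_pt V g (pi0 V g T v).
  by apply/fixed_vstar0; rewrite -proj0; apply: (proj_vstar HV Hg HT).
by exists u; rewrite -pi0_v; apply: (sub_pi0_in_O HV Hg HT).
Qed.
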